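(* Let $r\in\mathbb{R}\setminus\{0\}$ and let $F$ be a distribution function on $\mathbb{R}$ with a density $f$ that is $(-r+1)$-decreasing with threshold $t^*(-r+1)$. If $r<0$, then $z\mapsto F(z^{1/r})$ is concave on $(0,(t^*(-r+1))^r)$; if $r>0$, then $z\mapsto F(z^{1/r})$ is concave on $((t^*(-r+1))^r,+\infty)$. In particular, $F$ is $r$-revealed-concave with threshold $t^{**}(r)=(t^*(-r+1))^r$.
   Context: A function $f:\mathbb{R}\to\mathbb{R}$ is $\alpha$-decreasing ($\alpha\in\mathbb{R}$) with threshold $t^*(\alpha)>0$ if $f$ is continuous on $(0,\infty)$ and $t\mapsto t^\alpha f(t)$ is strictly decreasing for all $t>t^*(\alpha)$. A function $F$ is $r$-revealed-concave with threshold $t^{**}(r)>0$ if: for $r<0$, $t\mapsto F(t^{1/r})$ is concave on $(0,t^{**}(r)]$; for $r=0$, $t\mapsto F(e^t)$ is concave on $[t^{**}(r),\infty)$; for $r>0$, $t\mapsto F(t^{1/r})$ is concave on $[t^{**}(r),\infty)$. *)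

From HB Require Import structures.
From mathcomp Require Import all_boot all_order all_algebra.
From mathcomp Require Import all_classical all_reals all_analysis.
Set Implicit Arguments. Unset Strict Implicit. Unset Printing Implicit Defensive.
Import Order.TTheory GRing.Theory Num.Theory.
Import numFieldNormedType.Exports.
Local Open Scope classical_set_scope.
Local Open Scope ring_scope.

Definition distribution_function (R : realType) (F : R -> R) : Prop :=
  {homo F : x y / x <= y} /\
  (F x @[x --> -oo] --> (0 : R)) /\
  (F x @[x --> +oo] --> (1 : R)) /\
  (forall x, F t @[t --> x^'+] --> F x).

Definition has_density (R : realType) (F f : R -> R) : Prop :=
  measurable_fun setT f /\ (forall x, 0 <= f x) /\
  (forall x, ((F x)%:E = \int[lebesgue_measure]_(t in `]-oo, x]) (f t)%:E)%E).

Definition alpha_decreasing (R : realType) (alpha tstar : R) (f : R -> R) : Prop :=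
  0 < tstar /\
  (forall x, 0 < x -> {for x, continuous f}) /\
  (forall s t, tstar < s -> s < t -> t `^ alpha * f t < s `^ alpha * f s).

Definition concave_on (R : realType) (A : set R) (g : R -> R) : Prop :=
  forall x y, A x -> A y -> forall l, 0 <= l <= 1 ->
    (1 - l) * g x + l * g y <= g ((1 - l) * x + l * y).

Definition revealed_concave (R : realType) (r tss : R) (F : R -> R) : Prop :=
  0 < tss /\
  (r < 0 -> concave_on [set z | 0 < z <= tss] (fun z => F (z `^ r^-1))) /\
  (r = 0 -> concave_on [set z | tss <= z] (fun z => F (expR z))) /\
  (0 < r -> concave_on [set z | tss <= z] (fun z => F (z `^ r^-1))).

From HB Require Import structures.
From mathcomp Require Import all_boot all_order all_algebra.
From mathcomp Require Import all_classical all_reals all_analysis.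
Import Order.TTheory GRing.Theory Num.Theory.
Import numFieldNormedType.Exports.
From mathcomp Require Import lra.
Local Open Scope classical_set_scope.
Local Open Scope ring_scope.

(* With s = 1/r, the fundamental theorem of calculus and the chain rule give
   d/dz F(z^s) = s * g(z^s), where g(t) = t^(1-r) f(t) is the function assumed
   strictly decreasing beyond t*; indeed z^(s-1) = (z^s)^(1-r).  The point z^s
   exceeds t* exactly on (0, t*^r) when r < 0 and on (t*^r, oo) when r > 0.
   There z |-> z^s is decreasing resp. increasing, and the sign of s makes
   s * g(z^s) nonincreasing in both cases.  A function whose derivative is
   nonincreasing is concave, by the mean value theorem on both sides of a
   convex combination. *)

Section real_functions.
Context {R : realType}.

Lemma lt0_ltr_powR (p : R) : p < 0 ->
  {in Num.pos &, {homo @powR R ^~ p : x y / x < y >-> y < x}}.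
Proof.
move=> p_lt0 x y x_gt0 y_gt0 xy; rewrite -[p]opprK !(powRN _ (- p)).
rewrite ltf_pV2 ?posrE ?powR_gt0//.
by apply: gt0_ltr_powR; rewrite ?nnegrE ?ltW ?oppr_gt0.
Qed.

Lemma concave_onS (A B : set R) (g : R -> R) :
  A `<=` B -> concave_on B g -> concave_on A g.
Proof. by move=> AB gB x y /AB Bx /AB By; exact: gB. Qed.

Lemma concave_onP (A : set R) (g : R -> R) :
  (forall x y, A x -> A y -> x < y -> forall l, 0 < l < 1 ->
     (1 - l) * g x + l * g y <= g ((1 - l) * x + l * y)) ->
  concave_on A g.
Proof.
move=> gA x y Ax Ay l /andP[l0 l1].
have [->|l0'] := eqVneq l 0; first by rewrite subr0 !mul1r !mul0r !addr0.
have [->|l1'] := eqVneq l 1; first by rewrite subrr !mul0r !add0r !mul1r.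
have l01 : 0 < l < 1 by rewrite !lt_def l0 l1 l0' eq_sym l1'.
case: (ltgtP x y) => [xy|yx|<-]; first exact: gA.
- have l01' : 0 < 1 - l < 1 by lra.
  have := gA y x Ay Ax yx (1 - l) l01'.
  by rewrite subKr addrC [l * y + _]addrC.
- by rewrite -!mulrDl subrK !mul1r.
Qed.

Lemma MVT_interval {A : set R} {h d : R -> R} {a b : R} :
  is_interval A -> (forall x, A x -> is_derive x 1 h (d x)) ->
  A a -> A b -> a < b ->
  exists2 c, c \in `]a, b[ & h b - h a = d c * (b - a).
Proof.
move=> iA hd Aa Ab ab; have Aab x : a <= x <= b -> A x by exact: iA.
apply: MVT => // [x /[!in_itv]/= /andP[ax xb]|].
  by apply/hd/Aab; rewrite !ltW.
apply: continuous_in_subspaceT => x /[!inE] /= /[!in_itv] /= /Aab /hd [dhx _].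
exact/differentiable_continuous/derivable1_diffP.
Qed.

(* Monotonicity of d is only needed strictly inside A, so the threshold t*^r,
   where g is not known to be monotone, may still belong to A. *)
Lemma concave_on_is_derive (A : set R) (h d : R -> R) :
  is_interval A -> (forall x, A x -> is_derive x 1 h (d x)) ->
  (forall x y, A x -> A y -> {in `]x, y[ &, {homo d : a b /~ a <= b}}) ->
  concave_on A h.
Proof.
move=> iA hd dA; apply: concave_onP => x y Ax Ay xy l /andP[l0 l1].
set m := (1 - l) * x + l * y.
have xm : x < m by rewrite /m; nra.
have my : m < y by rewrite /m; nra.
have Am : A m by apply: (iA x y) => //; rewrite !ltW.
have [c1 /[!in_itv]/= /andP[xc1 c1m] hxm] := MVT_interval iA hd Ax Am xm.
have [c2 /[!in_itv]/= /andP[mc2 c2y] hmy] := MVT_interval iA hd Am Ay my.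
have d21 : d c2 <= d c1.
  apply: (dA x y Ax Ay); rewrite ?in_itv/=; [apply/andP; split..|]; lra.
have lly : 0 <= l * (1 - l) * (y - x) by rewrite !mulr_ge0 //; lra.
suff : l * (h y - h m) <= (1 - l) * (h m - h x) by lra.
rewrite hxm hmy /m; nra.
Qed.

Lemma has_density_integrable {F f : R -> R} : has_density F f ->
  forall u, (@lebesgue_measure R).-integrable `]-oo, u] (EFin \o f).
Proof.
move=> [mf [f0 Fint]] u; apply/integrableP; split.
  by apply/measurable_realfun.measurable_EFinP; exact: measurable_funS mf.
under eq_integral => t _ do rewrite /= ger0_norm //.
by rewrite -Fint ltry.
Qed.

Lemma has_density_is_derive {F f : R -> R} {x : R} :
  has_density F f -> {for x, continuous f} -> is_derive x 1 F (f x).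
Proof.
move=> Ff fx; have [_ [_ Fint]] := Ff.
have FE : F = fun y => (\int[lebesgue_measure]_(t in `]-oo, y]) f t)%R.
  by apply/funext => y; rewrite /Rintegral -Fint.
have x_lt : x < x + 1 by rewrite ltrDl.
have [dF F'x] := continuous_FTC1 x_lt (has_density_integrable Ff (x + 1)) (ltNyr x) fx.
by rewrite FE; apply: DeriveDef; rewrite // -derive1E.
Qed.

End real_functions.

Section revealed_concavity.
Context {R : realType} {r tstar : R} {F f : R -> R}.
Hypotheses (r_neq0 : r != 0) (Ff : has_density F f)
  (f_dec : alpha_decreasing (- r + 1) tstar f).

Local Notation Fr := (fun z => F (z `^ r^-1)).
Local Notation dFr z := (r^-1 * ((z `^ r^-1) `^ (- r + 1) * f (z `^ r^-1))).

Let tstar_gt0 : 0 < tstar. Proof. by case: f_dec. Qed.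

Let threshold_powRK : (tstar `^ r) `^ r^-1 = tstar.
Proof. by rewrite -powRrM mulfV // powRr1 // ltW. Qed.

Lemma is_derive_cdf_powR (z : R) : 0 < z -> is_derive z 1 Fr (dFr z).
Proof.
move=> z_gt0; have [_ [f_cont _]] := f_dec.
have zs_gt0 : 0 < z `^ r^-1 by exact: powR_gt0.
have -> : dFr z = f (z `^ r^-1) * (r^-1 * z `^ (r^-1 - 1)).
  rewrite -powRrM mulrDr mulrN mulVf // mulr1 addrC.
  by rewrite [RHS]mulrC mulrA.
exact: (is_derive1_comp (g := fun y => y `^ r^-1)
  (has_density_is_derive Ff (f_cont _ zs_gt0))
  (is_derive1_powR r^-1 z_gt0)).
Qed.

Lemma derive_cdf_powR_le (a b : R) : 0 < a -> a <= b ->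
  tstar < a `^ r^-1 -> tstar < b `^ r^-1 -> dFr b <= dFr a.
Proof.
move=> a_gt0; rewrite le_eqVlt => /predU1P[-> //|ab] ta tb.
have [_ [_ dec]] := f_dec.
have b_gt0 : 0 < b by exact: lt_trans ab.
have [r_lt0|r_gt0|r_eq0] := ltgtP r 0; last by move: r_neq0; rewrite r_eq0 eqxx.
- have ba : b `^ r^-1 < a `^ r^-1.
    by apply: lt0_ltr_powR; rewrite ?posrE ?invr_lt0.
  by rewrite ler_nM2l ?invr_lt0 // ltW // dec.
- have ab' : a `^ r^-1 < b `^ r^-1.
    by apply: gt0_ltr_powR; rewrite ?nnegrE ?invr_gt0 ?ltW.
  by rewrite ler_pM2l ?invr_gt0 // ltW // dec.
Qed.

Lemma concave_cdf_powR_lt0 :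
  r < 0 -> concave_on [set z | 0 < z <= tstar `^ r] Fr.
Proof.
move=> r_lt0; apply: (@concave_on_is_derive _ _ _ (fun z => dFr z)).
- move=> x y /andP[x_gt0 _] /andP[_ yT] z /andP[xz zy].
  by rewrite /= (lt_le_trans x_gt0 xz) (le_trans zy yT).
- by move=> z /andP[z_gt0 _]; exact: is_derive_cdf_powR.
move=> x y /andP[x_gt0 _] /andP[_ yT] b a /[!in_itv]/= /andP[_ by_] /andP[xa _] ab.
have tstar_lt c : 0 < c -> c < y -> tstar < c `^ r^-1.
  move=> c_gt0 cy; rewrite -[X in X < _]threshold_powRK.
  by apply: lt0_ltr_powR; rewrite ?invr_lt0 ?posrE ?powR_gt0 ?(lt_le_trans cy).
have a_gt0 := lt_trans x_gt0 xa.
apply: derive_cdf_powR_le; rewrite ?tstar_lt ?(lt_le_trans a_gt0) //.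
exact: le_lt_trans by_.
Qed.

Lemma concave_cdf_powR_gt0 :
  0 < r -> concave_on [set z | tstar `^ r <= z] Fr.
Proof.
move=> r_gt0; have T_gt0 : 0 < tstar `^ r by exact: powR_gt0.
apply: (@concave_on_is_derive _ _ _ (fun z => dFr z)).
- by move=> x y /= Tx _ z /andP[xz _]; exact: le_trans xz.
- by move=> z /= Tz; apply: is_derive_cdf_powR; exact: lt_le_trans Tz.
move=> x y /= Tx _ b a /[!in_itv]/= /andP[xb _] /andP[xa _] ab.
have tstar_lt c : x < c -> tstar < c `^ r^-1.
  move=> xc; have c_gt0 := lt_le_trans T_gt0 (le_trans Tx (ltW xc)).
  rewrite -[X in X < _]threshold_powRK.
  by apply: gt0_ltr_powR; rewrite ?invr_gt0 ?nnegrE ?ltW ?(le_lt_trans Tx).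
by apply: derive_cdf_powR_le; rewrite ?tstar_lt ?(lt_trans T_gt0) ?(le_lt_trans Tx).
Qed.

End revealed_concavity.

Theorem lemma2p8 (R : realType) (r tstar : R) (F f : R -> R) :
  r != 0 ->
  distribution_function F ->
  has_density F f ->
  alpha_decreasing (- r + 1) tstar f ->
  (r < 0 -> concave_on [set z | 0 < z < tstar `^ r] (fun z => F (z `^ r^-1))) /\
  (0 < r -> concave_on [set z | tstar `^ r < z] (fun z => F (z `^ r^-1))) /\
  revealed_concave r (tstar `^ r) F.
Proof.
move=> r_neq0 _ Ff f_dec.
have concave_lt0 := concave_cdf_powR_lt0 r_neq0 Ff f_dec.
have concave_gt0 := concave_cdf_powR_gt0 r_neq0 Ff f_dec.
split; [|split; [|split; [|split; [|split]]]].
- move=> /concave_lt0; apply: concave_onS => z /andP[z_gt0 zT].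
  by rewrite /= z_gt0 ltW.
- by move=> /concave_gt0; apply: concave_onS => z /ltW.
- by apply: powR_gt0; case: f_dec.
- exact: concave_lt0.
- by move=> r_eq0; move: r_neq0; rewrite r_eq0 eqxx.
- exact: concave_gt0.
Qed.
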